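(* For every time $t$, let $C_t=\mathcal{K}-b_t$ and let $g_t(\theta)=(\mathbb{1}\{y_t\le b_t^{\alpha}+\theta^{\alpha}\}-\alpha)_{\alpha\in\mathcal{A}}$ be the gradient of the MultiQT loss $\ell_t(\theta)=\sum_{\alpha\in\mathcal{A}}\rho_\alpha(b_t^{\alpha}+\theta^{\alpha},y_t)$. Then $-g_t(\theta)\in T_{C_t}(\theta)$ for all $\theta$ on the boundary of $C_t$; i.e., $(\ell_t,C_t)$ satisfies inward flow.
   Context: $\mathcal{A}=\{\alpha_1<\dots<\alpha_m\}\subset(0,1)$; $\mathcal{K}=\{x\in\mathbb{R}^m:x_1\le\dots\le x_m\}$; base forecasts $b_t\in\mathcal{K}$, outcomes $y_t\in\mathbb{R}$; $C-v=\{x-v:x\in C\}$. Quantile loss $\rho_\alpha(\hat y,y)=\alpha|y-\hat y|$ if $y\ge\hat y$ and $(1-\alpha)|y-\hat y|$ otherwise. Tangent cone $T_C(x)=\mathrm{cl}\{y:\exists\beta>0,\ x+\varepsilon y\in C\ \forall\varepsilon\in[0,\beta]\}$. *)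

From HB Require Import structures.
From mathcomp Require Import all_boot all_order all_algebra.
From mathcomp Require Import all_classical all_reals all_analysis.
Set Implicit Arguments. Unset Strict Implicit. Unset Printing Implicit Defensive.
Import Order.TTheory GRing.Theory Num.Theory.
Import numFieldNormedType.Exports.
Local Open Scope classical_set_scope.
Local Open Scope ring_scope.

Section Defs.
Variables (R : realType) (m : nat).

Definition Kcone : set 'rV[R]_m :=
  [set x | forall i j : 'I_m, (i <= j)%N -> x 0 i <= x 0 j].

Definition setshift (C : set 'rV[R]_m) (v : 'rV[R]_m) : set 'rV[R]_m :=
  [set x - v | x in C].

Definition tangent_cone (C : set 'rV[R]_m) (x : 'rV[R]_m) : set 'rV[R]_m :=
  closure [set y | exists2 beta : R, 0 < beta &
                     forall eps : R, 0 <= eps <= beta -> C (x + eps *: y)].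

Definition boundary (C : set 'rV[R]_m) : set 'rV[R]_m :=
  closure C `\` interior C.

Definition qloss (a yhat y : R) : R :=
  if yhat <= y then a * `|y - yhat| else (1 - a) * `|y - yhat|.

Definition multiqt_loss (alpha : 'I_m -> R) (b : 'rV[R]_m) (y : R)
  (theta : 'rV[R]_m) : R :=
  \sum_(i < m) qloss (alpha i) (b 0 i + theta 0 i) y.

Definition multiqt_grad (alpha : 'I_m -> R) (b : 'rV[R]_m) (y : R)
  (theta : 'rV[R]_m) : 'rV[R]_m :=
  \row_i (((y <= b 0 i + theta 0 i)%R : bool)%:R - alpha i).

End Defs.

(* The cone K - b is closed, so a boundary point theta satisfies theta + b in K.
   Moving from theta along -g changes coordinate i at rate alpha_i - 1{y <= x_i},
   where x = theta + b. These rates are nondecreasing in i except where the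
   indicator jumps, i.e. between an index i with x_i < y and an index j with
   y <= x_j; there the gap x_j - x_i >= y - x_i is positive and is closed at rate
   at most 1. Hence for steps eps <= min {y - x_i | x_i < y} the point stays
   in K - b, and -g is even a feasible direction at theta. *)

From HB Require Import structures.
From mathcomp Require Import all_boot all_order all_algebra.
From mathcomp Require Import all_classical all_reals all_analysis.
From mathcomp Require Import lra.
Import Order.TTheory GRing.Theory Num.Theory.
Import numFieldNormedType.Exports.
Local Open Scope classical_set_scope.
Local Open Scope ring_scope.

Section ClosedShiftedCone.
Variables (R : realType) (m : nat).

Lemma setshiftE (C : set 'rV[R]_m) (v : 'rV[R]_m) :
  setshift C v = (fun x => x + v) @^-1` C.
Proof.
apply/seteqP; split=> [_ [x Cx <-]|x Cx]; first by rewrite /= subrK.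
by exists (x + v); rewrite ?addrK.
Qed.

Lemma closed_setshift (C : set 'rV[R]_m) (v : 'rV[R]_m) :
  closed C -> closed (setshift C v).
Proof.
rewrite setshiftE; apply: preimage_closed => x _.
by apply: continuousD => //; apply: cst_continuous.
Qed.

Lemma closed_Kcone : closed (@Kcone R m).
Proof.
pose ordered := [set p : 'I_m * 'I_m | (p.1 <= p.2)%N].
have -> : @Kcone R m =
    \bigcap_(p in ordered) (fun x : 'rV[R]_m => x 0 p.2 - x 0 p.1) @^-1` [set r | 0 <= r].
  apply/seteqP; split=> [x Kx p /Kx|x Kx i j ij]; first by rewrite /= subr_ge0.
  by rewrite -subr_ge0; apply: (Kx (i, j)).
apply: closed_bigI => p _; apply: preimage_closed; last exact: closed_ge.
by move=> x _; apply: continuousB; apply: coord_continuous.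
Qed.

End ClosedShiftedCone.

Lemma quantile_step_le {R : realDomainType} {a1 a2 x1 x2 : R} (y : R) {eps : R} :
  x1 <= x2 -> a1 <= a2 -> 0 <= eps -> (x1 < y -> eps <= y - x1) ->
  x1 + eps * (a1 - ((y <= x1)%R : bool)%:R) <= x2 + eps * (a2 - ((y <= x2)%R : bool)%:R).
Proof.
move=> x12 a12 eps0 small.
have rate : eps * a1 <= eps * a2 by rewrite ler_wpM2l.
have [y1|y1] := leP y x1.
  by rewrite (le_trans y1 x12) !mulrBr mulr1n mulr1; lra.
have eps_small := small y1.
by have [y2|y2] := leP y x2; rewrite !mulrBr ?mulr1n ?mulr0n ?mulr1 mulr0; lra.
Qed.

Lemma multiqt_grad_feasible {R : realType} {m : nat} (alpha : 'I_m -> R)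
    (alpha_homo : forall i j : 'I_m, (i <= j)%N -> alpha i <= alpha j)
    (b : 'rV[R]_m) (y : R) (theta : 'rV[R]_m) :
  Kcone (theta + b) ->
  exists2 beta : R, 0 < beta & forall eps : R, 0 <= eps <= beta ->
    Kcone (theta + eps *: - multiqt_grad alpha b y theta + b).
Proof.
move=> Kx.
pose beta := \big[Order.min/1]_(i | b 0 i + theta 0 i < y) (y - (b 0 i + theta 0 i)).
have beta_gt0 : 0 < beta by apply: lt_bigmin => // i; rewrite subr_gt0.
exists beta => // eps /andP[eps0 eps_beta] i j ij; rewrite !mxE.
have xij := Kx i j ij; rewrite !mxE !(addrC (theta 0 _)) in xij.
have small : b 0 i + theta 0 i < y -> eps <= y - (b 0 i + theta 0 i).
  by move=> x_lt_y; apply: le_trans eps_beta _; apply: bigmin_le_cond.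
by have := quantile_step_le y xij (alpha_homo i j ij) eps0 small; lra.
Qed.

Theorem lemma2 (R : realType) (m : nat) (alpha : 'I_m -> R)
    (alpha_incr : forall i j : 'I_m, (i < j)%N -> alpha i < alpha j)
    (alpha_range : forall i : 'I_m, 0 < alpha i < 1)
    (b : 'rV[R]_m) (hb : Kcone b) (y : R) (theta : 'rV[R]_m) :
  boundary (setshift (@Kcone R m) b) theta ->
  tangent_cone (setshift (@Kcone R m) b) theta (- multiqt_grad alpha b y theta).
Proof.
move=> [cl_theta _].
have alpha_homo (i j : 'I_m) : (i <= j)%N -> alpha i <= alpha j.
  by rewrite leq_eqVlt => /orP[/eqP/val_inj -> //|/alpha_incr/ltW].
have closedC : closed (setshift (@Kcone R m) b).
  exact/closed_setshift/closed_Kcone.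
move: cl_theta; rewrite -(closure_id _).1 // setshiftE.
move=> /(multiqt_grad_feasible alpha alpha_homo b y)[beta beta_gt0 feasible].
by apply: subset_closure; exists beta.
Qed.
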